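(* Let $n\ge1$, $\alpha_1,\dots,\alpha_n\ge0$, and let $U:[0,\infty)\to\mathbb{R}$ be continuous, strictly increasing, concave and differentiable with $U(0)=0$. Let $\varepsilon>0$ be such that $\varepsilon/n$ lies in the range of $U$, and suppose $K:=1/U^{-1}(\varepsilon/n)$ is a positive integer. Let $\mathrm{OPT}$ be the maximum of $\sum_{i=1}^n U(\alpha_i+x_i)$ over real $x_i\ge0$ with $\sum_i x_i=1$, and let $\mathrm{OPT}_K$ be the maximum of the same objective over $x_i\in\{0,1/K,2/K,\dots\}$ with $\sum_i x_i\le1$. Then $\mathrm{OPT}-\mathrm{OPT}_K\le\varepsilon$; that is, an optimal solution of the $K$-discretized problem is an additive $\varepsilon$-approximation of the optimum of the continuous problem.
   Context: The continuous common goods problem: one agent with one unit of infinitely divisible resource and $n$ goods with existing resource levels $\alpha_i$, utility $\sum_i U(\alpha_i+x_i)$. The $K$-discretized version: the agent's unit of resource consists of $K$ atomic units of volume $1/K$. *)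

From mathcomp Require Import all_boot all_order all_algebra.
From mathcomp Require Import all_classical all_reals all_analysis.
Set Implicit Arguments. Unset Strict Implicit. Unset Printing Implicit Defensive.
Import Order.TTheory GRing.Theory Num.Theory.
Import numFieldNormedType.Exports.
Local Open Scope ring_scope.
Local Open Scope classical_set_scope.

Definition concave_on_nonneg (R : realType) (U : R -> R) : Prop :=
  forall x y t : R, 0 <= x -> 0 <= y -> 0 <= t -> t <= 1 ->
    t * U x + (1 - t) * U y <= U (t * x + (1 - t) * y).

Definition strictly_increasing_on_nonneg (R : realType) (U : R -> R) : Prop :=
  forall x y : R, 0 <= x -> x < y -> U x < U y.

Definition differentiable_on_nonneg (R : realType) (U : R -> R) : Prop :=
  (forall x : R, 0 < x -> derivable U x 1) /\
  cvg ((fun h : R => h^-1 * (U h - U 0)) @ (0 : R)^'+).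

Definition cg_obj (R : realType) (n : nat) (U : R -> R) (alpha x : 'I_n -> R) : R :=
  \sum_(i < n) U (alpha i + x i).

Definition cg_feasible (R : realType) (n : nat) (x : 'I_n -> R) : Prop :=
  (forall i, 0 <= x i) /\ \sum_(i < n) x i = 1.

(* K-discretized points: x_i = k_i / K with k_i natural and sum x_i <= 1,
   i.e. sum k_i <= K. *)
Definition disc_point (R : realType) (n K : nat) (k : 'I_n -> nat) : 'I_n -> R :=
  fun i => (k i)%:R / K%:R.

Definition disc_feasible (n K : nat) (k : 'I_n -> nat) : Prop :=
  (\sum_(i < n) k i <= K)%N.

Definition disc_optimal (R : realType) (n K : nat) (U : R -> R) (alpha : 'I_n -> R)
    (k : 'I_n -> nat) : Prop :=
  disc_feasible K k /\
  forall k' : 'I_n -> nat, disc_feasible K k' ->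
    cg_obj U alpha (disc_point R K k') <= cg_obj U alpha (disc_point R K k).

(* Round every coordinate of a continuous feasible point [x] down to the grid
   [(1/K) N].  The rounded point is feasible for the discretized problem and loses
   less than [1/K = U^-1(eps/n)] in each coordinate.  A concave [U] with [U 0 = 0]
   is subadditive, so each term of the objective drops by at most
   [U (1/K) = eps/n], i.e. the whole objective by at most [eps]; the discrete
   optimum does at least as well as the rounded point. *)
From mathcomp Require Import all_boot all_order all_algebra.
From mathcomp Require Import all_classical all_reals all_analysis.
Import Order.TTheory GRing.Theory Num.Theory.
Import numFieldNormedType.Exports.
Local Open Scope ring_scope.
Local Open Scope classical_set_scope.

Section ConcaveUtility.
Context {R : realType} {U : R -> R}.
Hypotheses (U_concave : concave_on_nonneg U) (U_incr : strictly_increasing_on_nonneg U)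
  (U0 : U 0 = 0).

Lemma concave_subadditive (a d : R) : 0 <= a -> 0 <= d -> U (a + d) <= U a + U d.
Proof.
move=> ha hd.
have [s0|s_neq0] := eqVneq (a + d) 0.
  have a0 : a = 0 by apply/eqP; rewrite eq_le ha andbT -s0 lerDl.
  by move: s0; rewrite a0 add0r => ->; rewrite U0 addr0.
have sp : 0 < a + d by rewrite lt_def s_neq0 addr_ge0.
pose t := a / (a + d).
have t0 : 0 <= t by rewrite divr_ge0 // addr_ge0.
have t1 : t <= 1 by rewrite ler_pdivrMr // mul1r lerDl.
have ta : t * (a + d) = a by rewrite /t divfK.
have td : (1 - t) * (a + d) = d by rewrite mulrBl mul1r ta addrC addKr.
have := U_concave (a + d) 0 t (ltW sp) (lexx _) t0 t1.
have := U_concave 0 (a + d) t (lexx _) (ltW sp) t0 t1.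
rewrite U0 !mulr0 addr0 add0r ta td addr0 add0r => hd' ha'.
by rewrite -[U (a + d)]mul1r -(subrK t 1) mulrDl addrC lerD.
Qed.

Lemma strictly_increasing_le (a b : R) : 0 <= a -> a <= b -> U a <= U b.
Proof.
by move=> a0; rewrite le_eqVlt => /predU1P [-> //|ab]; exact/ltW/U_incr.
Qed.

Lemma cg_obj_sub_le {n : nat} {alpha x z : 'I_n -> R} {y : R} :
  (forall i, 0 <= alpha i) -> (forall i, 0 <= z i) ->
  (forall i, 0 <= x i - z i <= y) ->
  cg_obj U alpha x - cg_obj U alpha z <= n%:R * U y.
Proof.
move=> ha hz hxz.
have -> : n%:R * U y = \sum_(i < n) U y by rewrite sumr_const card_ord mulr_natl.
rewrite /cg_obj -sumrB.
apply: ler_sum => i _; case/andP: (hxz i) => d0 dy.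
rewrite lerBlDl -{1}(subrKC (z i) (x i)) addrA.
apply: le_trans (concave_subadditive _ _ (addr_ge0 (ha i) (hz i)) d0) _.
by rewrite lerD2l strictly_increasing_le.
Qed.

End ConcaveUtility.

Definition floor_disc {R : realType} {n : nat} (K : nat) (x : 'I_n -> R) : 'I_n -> nat :=
  fun i => Num.truncn (K%:R * x i).

Section FloorDiscretization.
Context {R : realType} {n K : nat} {x : 'I_n -> R}.
Hypotheses (K_gt0 : (0 < K)%N) (x_ge0 : forall i, 0 <= x i).

Lemma floor_disc_bounds i :
  (floor_disc K x i)%:R <= K%:R * x i < (floor_disc K x i).+1%:R.
Proof. by apply: truncn_itv; rewrite mulr_ge0. Qed.

Lemma floor_disc_feasible : \sum_(i < n) x i <= 1 -> disc_feasible K (floor_disc K x).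
Proof.
move=> xs; rewrite /disc_feasible -(ler_nat R) natr_sum.
apply: le_trans (_ : \sum_(i < n) K%:R * x i <= _).
  by apply: ler_sum => i _; case/andP: (floor_disc_bounds i).
by rewrite -mulr_sumr ler_piMr.
Qed.

Lemma floor_disc_gap i :
  0 <= x i - disc_point R K (floor_disc K x) i <= K%:R^-1.
Proof.
have Kp : 0 < K%:R :> R by rewrite ltr0n.
case/andP: (floor_disc_bounds i) => lo hi.
rewrite /disc_point subr_ge0 ler_pdivrMr // mulrC lo /= lerBlDr.
have -> : K%:R^-1 + (floor_disc K x i)%:R / K%:R = (floor_disc K x i).+1%:R / K%:R :> R.
  by rewrite -natr1 mulrDl mul1r addrC.
rewrite ler_pdivlMr // mulrC.
exact: ltW.
Qed.

End FloorDiscretization.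

Theorem lemma3 (R : realType) (n : nat) (alpha : 'I_n -> R) (U : R -> R)
  (eps : R) (K : nat) :
  (0 < n)%N ->
  (forall i, 0 <= alpha i) ->
  {within `[0, +oo[%classic, continuous U} ->
  strictly_increasing_on_nonneg U ->
  concave_on_nonneg U ->
  differentiable_on_nonneg U ->
  U 0 = 0 ->
  0 < eps ->
  (* y = U^{-1}(eps/n) exists (unique, as U is strictly increasing) and 1/y = K, K a positive integer *)
  (exists y : R, 0 <= y /\ U y = eps / n%:R /\ y^-1 = K%:R) ->
  (0 < K)%N ->
  forall (x : 'I_n -> R) (k : 'I_n -> nat),
    cg_feasible x ->
    disc_optimal K U alpha k ->
    cg_obj U alpha x - cg_obj U alpha (disc_point R K k) <= eps.
Proof.
move=> n0 ha _ hinc hc _ U0 _ [y [_ [Uy yK]]] K0 x k [x0 xs] [_ kopt].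
have -> : eps = n%:R * U (K%:R^-1).
  by rewrite -yK invrK Uy mulrC divfK // pnatr_eq0 -lt0n.
apply: le_trans (cg_obj_sub_le hc hinc U0 ha _ (floor_disc_gap K0 x0)).
- by rewrite lerB // kopt //; apply: floor_disc_feasible; rewrite ?xs.
- by move=> i; rewrite /disc_point divr_ge0.
Qed.
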